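(* Let $x\in\Gamma$ be such that $g$ is $C^1$ near $x$, let $x^*\in\mathbb R^n$, let $\lambda\in\Lambda(x,x^* )$ and let $u\in K_\Gamma(x,x^* )$. Then $\langle\mathcal H(x,\lambda)u,u\rangle\ge0$.
   Context: Setting. Let $n,m\ge1$ and let $\mathcal Q:=\{(q_0,q_r)\in\mathbb R\times\mathbb R^m:\|q_r\|\le q_0\}$ be the second-order cone. For $q=(q_0,q_r)\in\mathbb R^{1+m}$ write $\hat q:=(-q_0,q_r)$, and let $\mathcal Q^*:=\{\hat q: q\in\mathcal Q\}=\{(q_0,q_r):\|q_r\|\le-q_0\}$. The normal cone to $\mathcal Q$ at $q\in\mathcal Q$ is $N_{\mathcal Q}(q)=\mathcal Q^*$ if $q=0$, $N_{\mathcal Q}(q)=\{0\}$ if $q\in\operatorname{int}\mathcal Q$, and $N_{\mathcal Q}(q)=\{\alpha\hat q:\alpha\ge0\}$ if $q\in\operatorname{bd}\mathcal Q\setminus\{0\}$. $\Gamma:=\{x\in\mathbb R^n: g(x)\in\mathcal Q\}$ with $g=(g_0,g_r):\mathbb R^n\to\mathbb R\times\mathbb R^m$; $\nabla g(x)$ is the Jacobian and $\nabla g(x)^*$ its transpose. $T_\Gamma(x)$ is the Bouligand tangent cone $\{v:\exists t_k\downarrow0,\ v_k\to v,\ x+t_kv_k\in\Gamma\}$. For $x\in\Gamma$, $x^*\in\mathbb R^n$: $\Lambda(x,x^* ):=\{\lambda\in N_{\mathcal Q}(g(x)):\nabla g(x)^*\lambda=x^*\}$; the critical cone is $K_\Gamma(x,x^*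 ):=\{u\in T_\Gamma(x):\langle x^*,u\rangle=0\}$. The curvature mapping is $\mathcal H(x,\lambda):=\frac{-\lambda_0}{g_0(x)}\big(\nabla g_r(x)^*\nabla g_r(x)-\nabla g_0(x)^*\nabla g_0(x)\big)$ if $g(x)\in\operatorname{bd}\mathcal Q\setminus\{0\}$ and $\mathcal H(x,\lambda):=0$ otherwise. *)

From Stdlib Require Import Reals ClassicalEpsilon.
From mathcomp Require Import ssreflect ssrfun ssrbool eqtype ssrnat seq fintype bigop.
Set Implicit Arguments. Unset Strict Implicit.
Open Scope R_scope.

Definition Vec (n : nat) := 'I_n -> R.

Definition vsum (n : nat) (f : 'I_n -> R) : R := \big[Rplus/0]_(i < n) f i.
Definition dot (n : nat) (u v : Vec n) : R := vsum (fun i => u i * v i).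
Definition vnorm (n : nat) (u : Vec n) : R := sqrt (dot u u).
Definition vadd (n : nat) (u v : Vec n) : Vec n := fun i => u i + v i.
Definition vsub (n : nat) (u v : Vec n) : Vec n := fun i => u i - v i.
Definition vscal (n : nat) (a : R) (u : Vec n) : Vec n := fun i => a * u i.

Definition Pt (m : nat) := (R * Vec m)%type.

Definition inQ (m : nat) (q : Pt m) : Prop := vnorm (snd q) <= fst q.
Definition inQdual (m : nat) (q : Pt m) : Prop := vnorm (snd q) <= - fst q.
Definition intQ (m : nat) (q : Pt m) : Prop := vnorm (snd q) < fst q.
Definition bdQ (m : nat) (q : Pt m) : Prop := vnorm (snd q) = fst q.
Definition isZero (m : nat) (q : Pt m) : Prop := fst q = 0 /\ forall j, snd q j = 0.
Definition hat (m : nat) (q : Pt m) : Pt m := (- fst q, snd q).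

Definition NQ (m : nat) (q lam : Pt m) : Prop :=
  (isZero q /\ inQdual lam)
  \/ (intQ q /\ isZero lam)
  \/ (bdQ q /\ ~ isZero q /\
      exists alpha, 0 <= alpha /\ fst lam = alpha * fst (hat q)
                    /\ forall j, snd lam j = alpha * snd (hat q) j).

Definition inGamma (n m : nat) (g : Vec n -> Pt m) (x : Vec n) : Prop := inQ (g x).

Definition frechet_at (n : nat) (f : Vec n -> R) (y G : Vec n) : Prop :=
  forall eps, 0 < eps -> exists delta, 0 < delta /\
    forall h : Vec n, vnorm h < delta ->
      Rabs (f (vadd y h) - f y - dot G h) <= eps * vnorm h.

Definition vcont_at (n : nat) (F : Vec n -> Vec n) (y : Vec n) : Prop :=
  forall eps, 0 < eps -> exists delta, 0 < delta /\
    forall z : Vec n, vnorm (vsub z y) < delta -> vnorm (vsub (F z) (F y)) < eps.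

(* g is C^1 near x, with J0 y = gradient of g0 at y and Jr y j = gradient
   of the j-th component of gr at y (rows of the Jacobian). *)
Definition C1_near (n m : nat) (g : Vec n -> Pt m)
    (J0 : Vec n -> Vec n) (Jr : Vec n -> 'I_m -> Vec n) (x : Vec n) : Prop :=
  exists r, 0 < r /\ forall y : Vec n, vnorm (vsub y x) < r ->
    frechet_at (fun z => fst (g z)) y (J0 y) /\ vcont_at J0 y /\
    forall j : 'I_m, frechet_at (fun z => snd (g z) j) y (Jr y j)
                     /\ vcont_at (fun z => Jr z j) y.

Definition jac_apply (n m : nat) (J0 : Vec n) (Jr : 'I_m -> Vec n) (u : Vec n) : Pt m :=
  (dot J0 u, fun j => dot (Jr j) u).
Definition jacT_apply (n m : nat) (J0 : Vec n) (Jr : 'I_m -> Vec n) (lam : Pt m) : Vec n :=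
  fun i => fst lam * J0 i + vsum (fun j => snd lam j * Jr j i).

Definition vconv (n : nat) (vk : nat -> Vec n) (v : Vec n) : Prop :=
  forall eps, 0 < eps -> exists N, forall k, (N <= k)%nat -> vnorm (vsub (vk k) v) < eps.
Definition TGamma (n m : nat) (g : Vec n -> Pt m) (x v : Vec n) : Prop :=
  exists (t : nat -> R) (vk : nat -> Vec n),
    (forall k, 0 < t k) /\ Un_cv t 0 /\ vconv vk v /\
    forall k, inGamma g (vadd x (vscal (t k) (vk k))).

Definition Lambda (n m : nat) (g : Vec n -> Pt m) (J0 : Vec n) (Jr : 'I_m -> Vec n)
    (x xs : Vec n) (lam : Pt m) : Prop :=
  NQ (g x) lam /\ forall i, jacT_apply J0 Jr lam i = xs i.

Definition KGamma (n m : nat) (g : Vec n -> Pt m) (x xs u : Vec n) : Prop :=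
  TGamma g x u /\ dot xs u = 0.

(* Curvature mapping H(x, lam) as a linear map R^n -> R^n:
   (-lam0/g0(x)) (grad gr^T grad gr - grad g0^T grad g0) if g(x) in bd Q \ {0},
   and 0 otherwise. *)
Definition Hcurv (n m : nat) (g : Vec n -> Pt m) (J0 : Vec n) (Jr : 'I_m -> Vec n)
    (x : Vec n) (lam : Pt m) : Vec n -> Vec n :=
  fun u i =>
    if excluded_middle_informative (bdQ (g x) /\ ~ isZero (g x)) then
      (- fst lam / fst (g x)) *
        (vsum (fun j => Jr j i * dot (Jr j) u) - J0 i * dot J0 u)
    else 0.

(* On the boundary of the cone, a multiplier has the form lam = alpha * hat(g(x))
   with alpha >= 0, and then -lam0 / g0(x) = alpha. Writing w = grad g(x) u, the
   quadratic form is alpha (|w_r|^2 - w_0^2). Criticality gives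
   0 = <xs, u> = <lam, w> = alpha (<g_r(x), w_r> - g_0(x) w_0), so when alpha > 0
   Cauchy-Schwarz and |g_r(x)| = g_0(x) > 0 yield w_0^2 <= |w_r|^2. *)
From HB Require Import structures.
From Stdlib Require Import Reals Lra Psatz ClassicalEpsilon.
From mathcomp Require Import ssreflect ssrfun ssrbool eqtype fintype bigop.
Open Scope R_scope.

Lemma Rplus_associative : associative Rplus. Proof. by move=> *; ring. Qed.
HB.instance Definition _ :=
  Monoid.isComLaw.Build R 0 Rplus Rplus_associative Rplus_comm Rplus_0_l.

Section Sums.
Context {n : nat}.
Implicit Types f g : 'I_n -> R.

Lemma eq_vsum f g : (forall i, f i = g i) -> vsum f = vsum g.
Proof. by move=> efg; apply: eq_bigr => i _. Qed.

Lemma vsumD f g : vsum (fun i => f i + g i) = vsum f + vsum g.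
Proof. exact: big_split. Qed.

Lemma vsumZ c f : vsum (fun i => c * f i) = c * vsum f.
Proof.
apply: (big_ind2 (fun a b => a = c * b)) => [|a1 a2 b1 b2 -> ->|//].
  by rewrite Rmult_0_r.
by rewrite Rmult_plus_distr_l.
Qed.

Lemma vsum_ge0 f : (forall i, 0 <= f i) -> 0 <= vsum f.
Proof. by move=> f_ge0; apply: big_ind => [|a b|i _]; [lra|lra|apply: f_ge0]. Qed.

Lemma vsum_ge_term f i : (forall j, 0 <= f j) -> f i <= vsum f.
Proof.
move=> f_ge0; rewrite /vsum (bigD1 i) //= big_mkcond /=.
rewrite -{1}[f i]Rplus_0_r; apply: Rplus_le_compat_l.
by apply: vsum_ge0 => j; case: (j != i) => //; apply: Rle_refl.
Qed.

Lemma vsum_exchange m (F : 'I_n -> 'I_m -> R) :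
  vsum (fun i => vsum (fun j => F i j)) = vsum (fun j => vsum (fun i => F i j)).
Proof. exact: exchange_big. Qed.

End Sums.

Arguments eq_vsum {n f g}.

Section InnerProduct.
Context {n : nat}.
Implicit Types u v w : Vec n.

Lemma dotDl u v w : dot (fun i => u i + v i) w = dot u w + dot v w.
Proof. by rewrite /dot -vsumD; apply: eq_vsum => i; ring. Qed.

Lemma dotZl c u v : dot (fun i => c * u i) v = c * dot u v.
Proof. by rewrite /dot -vsumZ; apply: eq_vsum => i; ring. Qed.

Lemma dot_self_ge0 v : 0 <= dot v v.
Proof. by apply: vsum_ge0 => i; apply: Rle_0_sqr. Qed.

Lemma dot_self_eq0 v i : dot v v = 0 -> v i = 0.
Proof.
move=> vv0; have := @vsum_ge_term _ (fun j => v j * v j) i.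
rewrite -/(dot v v) vv0 => /(_ (fun j => Rle_0_sqr (v j))).
by have := Rle_0_sqr (v i); nra.
Qed.

Lemma vnorm_sqr v : vnorm v * vnorm v = dot v v.
Proof. exact/sqrt_sqrt/dot_self_ge0. Qed.

Lemma cauchy_schwarz u v : dot u v * dot u v <= dot u u * dot v v.
Proof.
set P := dot u u; set S := dot u v; set B := dot v v.
have [P0 | Ppos] : P = 0 \/ 0 < P by have := dot_self_ge0 u; rewrite -/P; lra.
  have -> : S = 0.
    rewrite /S /dot (eq_vsum (g := fun i => 0 * v i)); last first.
      by move=> i; rewrite (dot_self_eq0 u i P0).
    by rewrite vsumZ; ring.
  by rewrite P0; lra.
(* Lagrange's identity: 0 <= sum_i (P v_i - S u_i)^2 = P (P B - S^2). *)
have : 0 <= vsum (fun i => (P * v i - S * u i) * (P * v i - S * u i)).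
  by apply: vsum_ge0 => i; apply: Rle_0_sqr.
rewrite (eq_vsum (g := fun i => P * P * (v i * v i)
                              + (- 2 * P * S * (u i * v i) + S * S * (u i * u i))));
  last by move=> i; ring.
rewrite !vsumD !vsumZ -/(dot v v) -/(dot u v) -/(dot u u) -/P -/S -/B => H.
by nra.
Qed.

End InnerProduct.

Section Jacobian.
Variables n m : nat.
Variables (J0 : Vec n) (Jr : 'I_m -> Vec n).

Lemma dot_transpose (a : Vec m) (u : Vec n) :
  dot (fun i => vsum (fun j => a j * Jr j i)) u = dot a (fun j => dot (Jr j) u).
Proof.
rewrite /dot (eq_vsum (g := fun i => vsum (fun j => a j * (Jr j i * u i)))); last first.
  by move=> i; rewrite Rmult_comm -vsumZ; apply: eq_vsum => j; ring.
by rewrite vsum_exchange; apply: eq_vsum => j; rewrite vsumZ.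
Qed.

Lemma dot_jacT_apply (lam : Pt m) (u : Vec n) :
  dot (jacT_apply J0 Jr lam) u
  = fst lam * fst (jac_apply J0 Jr u) + dot (snd lam) (snd (jac_apply J0 Jr u)).
Proof. by rewrite dotDl dotZl dot_transpose. Qed.

Lemma dot_curvature_form (c : R) (u : Vec n) :
  let w := jac_apply J0 Jr u in
  dot (fun i => c * (vsum (fun j => Jr j i * dot (Jr j) u) - J0 i * dot J0 u)) u
  = c * (dot (snd w) (snd w) - fst w * fst w).
Proof.
rewrite /= dotZl {1}/dot.
rewrite (eq_vsum (g := fun i => (vsum (fun j => dot (Jr j) u * Jr j i)
                                + - dot J0 u * J0 i) * u i)); last first.
  by move=> i; congr (_ * _); rewrite /Rminus; congr (_ + _);
     [apply: eq_vsum => j | ]; ring.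
rewrite -/(dot _ u) dotDl dot_transpose dotZl; ring.
Qed.

End Jacobian.

Section SecondOrderCone.
Context {m : nat}.
Implicit Types q lam : Pt m.

Lemma bdQ_fst_gt0 q : bdQ q -> ~ isZero q -> 0 < fst q.
Proof.
rewrite /bdQ /vnorm => bd nz.
have := sqrt_pos (dot (snd q) (snd q)); rewrite bd => /Rle_lt_or_eq_dec [//|q00].
case: nz; split=> [//|j]; apply: dot_self_eq0.
by apply: sqrt_eq_0; [apply: dot_self_ge0 | rewrite bd q00].
Qed.

Lemma NQ_bdQ {q lam} : NQ q lam -> bdQ q -> ~ isZero q ->
  exists alpha, 0 <= alpha /\ fst lam = - alpha * fst q
                /\ forall j, snd lam j = alpha * snd q j.
Proof.
move=> [[q0 _] | [[int _] | [_ [_ [alpha [? [lam0 lamr]]]]]]] bd nz.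
- by case: nz.
- by move: int; rewrite /intQ bd; lra.
- by exists alpha; split; [|split; [rewrite lam0 /=; ring | exact: lamr]].
Qed.

Lemma bdQ_inner_sqr_le q (w : Pt m) :
  bdQ q -> 0 < fst q -> dot (snd q) (snd w) = fst q * fst w ->
  fst w * fst w <= dot (snd w) (snd w).
Proof.
move=> bd q0pos inner.
have := cauchy_schwarz (snd q) (snd w).
rewrite inner -vnorm_sqr bd => cs.
apply: (Rmult_le_reg_l (fst q * fst q)); first nra.
by nra.
Qed.

End SecondOrderCone.

Lemma Hcurv_off n m (g : Vec n -> Pt m) J0 Jr x lam u :
  ~ (bdQ (g x) /\ ~ isZero (g x)) -> dot (Hcurv g J0 Jr x lam u) u = 0.
Proof.
move=> off; rewrite /Hcurv.
destruct excluded_middle_informative as [on|_off]; first by case: off.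
by rewrite /= /dot vsumZ; ring.
Qed.

Lemma Hcurv_on n m (g : Vec n -> Pt m) J0 Jr x lam u :
  bdQ (g x) /\ ~ isZero (g x) ->
  dot (Hcurv g J0 Jr x lam u) u
  = - fst lam / fst (g x) * (dot (snd (jac_apply J0 Jr u)) (snd (jac_apply J0 Jr u))
                             - fst (jac_apply J0 Jr u) * fst (jac_apply J0 Jr u)).
Proof.
move=> on; rewrite /Hcurv.
destruct excluded_middle_informative as [_on|off]; last by case: off.
exact: dot_curvature_form.
Qed.

Theorem lemma4p1 (n m : nat) (g : Vec n -> Pt m)
    (J0 : Vec n -> Vec n) (Jr : Vec n -> 'I_m -> Vec n)
    (x xs u : Vec n) (lam : Pt m) :
  (1 <= n)%nat -> (1 <= m)%nat ->
  inGamma g x ->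
  C1_near g J0 Jr x ->
  Lambda g (J0 x) (Jr x) x xs lam ->
  KGamma g x xs u ->
  0 <= dot (Hcurv g (J0 x) (Jr x) x lam u) u.
Proof.
move=> _ _ _ _ [normal xs_eq] [_ critical].
have [[bd nz] | off] := classic (bdQ (g x) /\ ~ isZero (g x)); last first.
  by rewrite Hcurv_off //; lra.
rewrite Hcurv_on //.
set w := jac_apply (J0 x) (Jr x) u.
have q0pos : 0 < fst (g x) by apply: bdQ_fst_gt0.
have [alpha [alpha_ge0 [lam0 lamr]]] := NQ_bdQ normal bd nz.
have -> : - fst lam / fst (g x) = alpha by rewrite lam0; field; lra.
have lam_w : alpha * (dot (snd (g x)) (snd w) - fst (g x) * fst w) = 0.
  have xs_u : dot xs u = dot (jacT_apply (J0 x) (Jr x) lam) u.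
    by apply: eq_vsum => i; rewrite xs_eq.
  have lamr_w : dot (snd lam) (snd w) = alpha * dot (snd (g x)) (snd w).
    by rewrite -dotZl; apply: eq_vsum => j; rewrite lamr.
  by rewrite -critical xs_u dot_jacT_apply -/w lamr_w lam0; ring.
have [-> | alpha_pos] : alpha = 0 \/ 0 < alpha by lra.
  by lra.
have inner : dot (snd (g x)) (snd w) = fst (g x) * fst w.
  by apply: (Rmult_eq_reg_l alpha); lra.
have : fst w * fst w <= dot (snd w) (snd w) by apply: (bdQ_inner_sqr_le (g x)).
by nra.
Qed.
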